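(* Let $Y=\{(x,y)\in\mathbb{R}^2:(x/a)^2+y^2=1\}$ with $a>1$. The map $h:Y\to Y$ is bijective if and only if $a\le\sqrt2$.
   Context: $h:Y\to Y$ sends $p\in Y$ to the unique point of the intersection of the normal line to $Y$ at $p$ with $Y\setminus\{p\}$. *)

From Stdlib Require Import Reals Lra ClassicalEpsilon.
Open Scope R_scope.

Definition on_ellipse (a : R) (p : R * R) : Prop :=
  (fst p / a) ^ 2 + (snd p) ^ 2 = 1.

(* A normal vector to Y at p = (x,y): the gradient of (x/a)^2 + y^2,
   up to the factor 2, i.e. (x / a^2, y). *)
Definition normal_vec (a : R) (p : R * R) : R * R :=
  (fst p / (a ^ 2), snd p).

Definition on_normal_line (a : R) (p q : R * R) : Prop :=
  exists t : R, q = (fst p + t * fst (normal_vec a p),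
                     snd p + t * snd (normal_vec a p)).

Definition normal_meet (a : R) (p q : R * R) : Prop :=
  on_normal_line a p q /\ on_ellipse a q /\ q <> p.

(* h p := the (unique) point of the intersection of the normal line to Y
   at p with Y \ {p} (chosen by Hilbert's epsilon; by the context this
   point exists and is unique for p on Y). *)
Definition h (a : R) (p : R * R) : R * R :=
  epsilon (inhabits (0, 0)) (fun q => normal_meet a p q).

Definition h_bijective_on_Y (a : R) : Prop :=
  (forall p q, on_ellipse a p -> on_ellipse a q -> h a p = h a q -> p = q) /\
  (forall q, on_ellipse a q -> exists p, on_ellipse a p /\ h a p = q).

From Stdlib Require Import Reals Lra ClassicalEpsilon.
Open Scope R_scope.

(* On the normal line [p + t n] with [n = (x / a^2, y)] the ellipse equation reads
   [t (2 |n|^2 + t Q(n)) = 0], so [h p] is explicit.  For [a > 1] its first coordinate is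
   [- x N(x) / D(x)], a function of [x] alone taking [x = -a, a] to [a, -a], and its second
   coordinate is [y] times a negative factor.  Hence [h] is onto by the intermediate value theorem,
   and it is one-to-one as soon as [x N(x) / D(x)] is strictly increasing on [[-a, a]], which is the
   case when [1 / a^2 >= 1 / 2].  For [a^2 > 2] the normals at [(0, 1)] and at some point off the
   [y]-axis both pass through [(0, -1)]. *)

Definition ellipse_form (a : R) (v : R * R) : R := (fst v / a) ^ 2 + snd v ^ 2.

Definition sqnorm (v : R * R) : R := fst v ^ 2 + snd v ^ 2.

Definition along_normal (a : R) (p : R * R) (t : R) : R * R :=
  (fst p + t * fst (normal_vec a p), snd p + t * snd (normal_vec a p)).

Definition second_meet_param (a : R) (p : R * R) : R :=
  -2 * sqnorm (normal_vec a p) / ellipse_form a (normal_vec a p).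

Definition second_meet (a : R) (p : R * R) : R * R :=
  along_normal a p (second_meet_param a p).

Lemma sum_sq_pos (u v : R) : (u, v) <> (0, 0) -> 0 < u ^ 2 + v ^ 2.
Proof.
  intros uv_neq0. assert (0 <= u ^ 2) by apply pow2_ge_0. assert (0 <= v ^ 2) by apply pow2_ge_0.
  destruct (Req_dec u 0) as [->|u_neq0].
  - assert (v <> 0) by (intros ->; auto).
    assert (0 < v ^ 2) by (rewrite <- Rsqr_pow2; apply Rlt_0_sqr; auto). lra.
  - assert (0 < u ^ 2) by (rewrite <- Rsqr_pow2; apply Rlt_0_sqr; auto). lra.
Qed.

Section NormalLine.

Variable a : R.
Hypothesis a_neq0 : a <> 0.

Lemma ellipse_form_along_normal (p : R * R) (t : R) :
  ellipse_form a (along_normal a p t) =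
  ellipse_form a p + t * (2 * sqnorm (normal_vec a p) + t * ellipse_form a (normal_vec a p)).
Proof.
  destruct p as [x y]; unfold ellipse_form, sqnorm, along_normal, normal_vec; cbn [fst snd].
  field; auto.
Qed.

Lemma ellipse_form_pos (v : R * R) : v <> (0, 0) -> 0 < ellipse_form a v.
Proof.
  destruct v as [x y]; intros v_neq0; apply sum_sq_pos; cbn [fst snd]; intros E.
  apply pair_equal_spec in E as [E ->].
  apply v_neq0; f_equal. apply Rmult_integral in E as [|E]; auto.
  destruct (Rinv_neq_0_compat a a_neq0 E).
Qed.

Lemma normal_vec_neq0 (p : R * R) : on_ellipse a p -> normal_vec a p <> (0, 0).
Proof.
  destruct p as [x y]; unfold on_ellipse, normal_vec; cbn [fst snd]; intros p_on E.
  apply pair_equal_spec in E as [E ->].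
  replace (x / a) with (x / a ^ 2 * a) in p_on by (field; auto). rewrite E in p_on. lra.
Qed.

Lemma on_ellipse_along_normal (p : R * R) (t : R) :
  on_ellipse a p ->
  (on_ellipse a (along_normal a p t) <-> t = 0 \/ t = second_meet_param a p).
Proof.
  intros p_on. pose proof (ellipse_form_pos _ (normal_vec_neq0 p p_on)) as Q_pos.
  change (on_ellipse a ?q) with (ellipse_form a q = 1) in *.
  rewrite ellipse_form_along_normal, p_on. unfold second_meet_param. split.
  - intros E. assert (t * (2 * sqnorm (normal_vec a p) + t * ellipse_form a (normal_vec a p)) = 0) as E'
      by lra.
    apply Rmult_integral in E' as [|E']; [left; auto|right].
    apply (Rmult_eq_reg_r (ellipse_form a (normal_vec a p))); [field_simplify|]; lra.
  - intros [->| ->]; [|field]; lra.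
Qed.

Lemma along_normal_eq_self (p : R * R) (t : R) :
  on_ellipse a p -> along_normal a p t = p -> t = 0.
Proof.
  intros p_on E. pose proof (normal_vec_neq0 p p_on) as n_neq0. unfold along_normal in E.
  destruct (normal_vec a p) as [n1 n2]; destruct p as [x y]; cbn [fst snd] in E.
  apply pair_equal_spec in E as [E1 E2].
  destruct (Req_dec t 0) as [|t_neq0]; auto.
  destruct n_neq0; f_equal; apply (Rmult_eq_reg_l t); lra.
Qed.

Lemma second_meet_param_neq0 (p : R * R) : on_ellipse a p -> second_meet_param a p <> 0.
Proof.
  intros p_on. pose proof (normal_vec_neq0 p p_on) as n_neq0.
  pose proof (ellipse_form_pos _ n_neq0). unfold second_meet_param, sqnorm.
  destruct (normal_vec a p) as [n1 n2]; cbn [fst snd].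
  pose proof (sum_sq_pos n1 n2 n_neq0). intros E.
  apply Rmult_integral in E as [E|E]; [lra|]. apply Rinv_neq_0_compat in E; lra.
Qed.

Lemma normal_meet_iff (p q : R * R) :
  on_ellipse a p -> (normal_meet a p q <-> q = second_meet a p).
Proof.
  intros p_on. split.
  - intros [[t ->] [q_on q_neq]]. change (on_ellipse a (along_normal a p t)) in q_on.
    apply on_ellipse_along_normal in q_on as [->| ->]; auto.
    destruct q_neq. unfold along_normal; destruct p; cbn [fst snd]; f_equal; ring.
  - intros ->. split; [exists (second_meet_param a p); reflexivity|split].
    + apply on_ellipse_along_normal; auto.
    + intros E. apply along_normal_eq_self in E; auto. exact (second_meet_param_neq0 p p_on E).
Qed.

Lemma h_eq_second_meet (p : R * R) : on_ellipse a p -> h a p = second_meet a p.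
Proof.
  intros p_on. apply normal_meet_iff; auto. unfold h. apply epsilon_spec.
  exists (second_meet a p). apply normal_meet_iff; auto.
Qed.

End NormalLine.

Definition fst_meet_num (c x : R) : R := 2 * c - 1 + (1 - c) ^ 2 * (c * x ^ 2).
Definition fst_meet_den (c x : R) : R := 1 - (1 - c ^ 2) * (c * x ^ 2).

Lemma fst_meet_num_den_vertex (c x : R) :
  c * x ^ 2 = 1 -> fst_meet_num c x = c ^ 2 /\ fst_meet_den c x = c ^ 2.
Proof. intros E; unfold fst_meet_num, fst_meet_den; rewrite E; split; ring. Qed.

Lemma fst_meet_cross_lt (c x1 x2 : R) :
  1 / 2 <= c < 1 -> c * x1 ^ 2 <= 1 -> c * x2 ^ 2 <= 1 -> x1 < x2 ->
  x1 * fst_meet_num c x1 * fst_meet_den c x2 < x2 * fst_meet_num c x2 * fst_meet_den c x1.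
Proof.
  intros [c_ge c_lt] x1_le x2_le x1_lt.
  set (f := 1 - c ^ 2).
  set (Q := (2 * c - 1) * (1 + f * (c * x1 * x2))
            + (1 - c) ^ 2 * c * (x1 ^ 2 + x1 * x2 + x2 ^ 2 - f * (c * x1 ^ 2 * x2 ^ 2))).
  replace (x2 * fst_meet_num c x2 * fst_meet_den c x1)
    with (x1 * fst_meet_num c x1 * fst_meet_den c x2 + (x2 - x1) * Q)
    by (unfold Q, f, fst_meet_num, fst_meet_den; ring).
  enough (0 < Q) by nra.
  assert (f_bounds : 0 < f < 1) by (unfold f; nra).
  assert (sq_pos : 0 < x1 ^ 2 + x2 ^ 2).
  { assert (0 < (x2 - x1) ^ 2) by (apply pow_lt; lra).
    assert (0 <= (x1 + x2) ^ 2) by apply pow2_ge_0. nra. }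
  assert (prod_bound : -1 <= c * x1 * x2 <= 1).
  { assert ((c * x1 * x2) ^ 2 = c * x1 ^ 2 * (c * x2 ^ 2)) by ring.
    assert (0 <= c * x1 ^ 2) by nra. assert (0 <= c * x2 ^ 2) by nra. nra. }
  assert (term1 : 0 <= (2 * c - 1) * (1 + f * (c * x1 * x2))) by (apply Rmult_le_pos; nra).
  assert (quartic_bound : c * x1 ^ 2 * x2 ^ 2 <= (x1 ^ 2 + x2 ^ 2) / 2).
  { assert (0 <= x1 ^ 2) by nra. assert (0 <= x2 ^ 2) by nra. nra. }
  assert (term2 : 0 < x1 ^ 2 + x1 * x2 + x2 ^ 2 - f * (c * x1 ^ 2 * x2 ^ 2)).
  { assert (0 <= (x1 + x2) ^ 2) by apply pow2_ge_0. nra. }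
  assert (0 < (1 - c) ^ 2 * c) by (apply Rmult_lt_0_compat; nra).
  unfold Q; nra.
Qed.

Lemma second_meet_reflect (a x y : R) :
  second_meet a (x, - y) = (fst (second_meet a (x, y)), - snd (second_meet a (x, y))).
Proof.
  unfold second_meet, second_meet_param, along_normal, ellipse_form, sqnorm, normal_vec; cbn [fst snd].
  replace ((- y) ^ 2) with (y ^ 2) by ring. f_equal; ring.
Qed.

Lemma on_ellipse_same_fst (a x y1 y2 : R) :
  on_ellipse a (x, y1) -> on_ellipse a (x, y2) -> y2 = y1 \/ y2 = - y1.
Proof.
  unfold on_ellipse; cbn [fst snd]; intros E1 E2.
  assert (E : (y2 - y1) * (y2 + y1) = 0) by nra.
  apply Rmult_integral in E as [|]; lra.
Qed.

Section ExplicitMeet.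

Variable a : R.
Hypothesis a_gt1 : 1 < a.

Let a_neq0 : a <> 0. Proof. lra. Qed.

Lemma inv_sq_bounds : 0 < / a ^ 2 < 1.
Proof.
  split; [apply Rinv_0_lt_compat; nra|].
  rewrite <- Rinv_1. apply Rinv_lt_contravar; nra.
Qed.

Lemma on_ellipse_iff (x y : R) : on_ellipse a (x, y) <-> / a ^ 2 * x ^ 2 + y ^ 2 = 1.
Proof.
  unfold on_ellipse; cbn [fst snd].
  replace ((x / a) ^ 2) with (/ a ^ 2 * x ^ 2) by (field; auto). reflexivity.
Qed.

Lemma on_ellipse_fst_bound (x y : R) : on_ellipse a (x, y) -> / a ^ 2 * x ^ 2 <= 1.
Proof. rewrite on_ellipse_iff. pose proof (pow2_ge_0 y). lra. Qed.

Lemma ellipse_form_normal_vec (x y : R) :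
  on_ellipse a (x, y) -> ellipse_form a (normal_vec a (x, y)) = fst_meet_den (/ a ^ 2) x.
Proof.
  rewrite on_ellipse_iff; intros p_on.
  unfold ellipse_form, normal_vec, fst_meet_den; cbn [fst snd].
  replace (y ^ 2) with (1 - / a ^ 2 * x ^ 2) by lra. field; auto.
Qed.

Lemma fst_second_meet (x y : R) :
  on_ellipse a (x, y) ->
  fst (second_meet a (x, y)) * fst_meet_den (/ a ^ 2) x = - x * fst_meet_num (/ a ^ 2) x.
Proof.
  intros p_on. pose proof (ellipse_form_pos a a_neq0 _ (normal_vec_neq0 a a_neq0 _ p_on)) as B_pos.
  rewrite <- (ellipse_form_normal_vec x y p_on).
  unfold second_meet, second_meet_param, along_normal.
  set (B := ellipse_form a (normal_vec a (x, y))) in *.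
  cbn [fst]. set (A := sqnorm (normal_vec a (x, y))). set (n1 := fst (normal_vec a (x, y))).
  replace ((x + -2 * A / B * n1) * B) with (x * B - 2 * A * n1) by (field; lra).
  unfold B; rewrite ellipse_form_normal_vec by auto. rewrite on_ellipse_iff in p_on.
  unfold A, n1, sqnorm, normal_vec, fst_meet_num, fst_meet_den; cbn [fst snd].
  replace (y ^ 2) with (1 - / a ^ 2 * x ^ 2) by lra. unfold Rdiv. ring.
Qed.

Lemma ellipse_form_le_sqnorm (v : R * R) : ellipse_form a v <= sqnorm v.
Proof.
  destruct v as [u w]; unfold ellipse_form, sqnorm; cbn [fst snd].
  replace ((u / a) ^ 2) with (/ a ^ 2 * u ^ 2) by (field; auto).
  pose proof inv_sq_bounds. pose proof (pow2_ge_0 u). nra.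
Qed.

Lemma second_meet_param_lt_m1 (p : R * R) : on_ellipse a p -> second_meet_param a p < -1.
Proof.
  intros p_on. pose proof (normal_vec_neq0 a a_neq0 _ p_on) as n_neq0.
  pose proof (ellipse_form_pos a a_neq0 _ n_neq0) as B_pos.
  pose proof (ellipse_form_le_sqnorm (normal_vec a p)) as B_le.
  unfold second_meet_param. apply (Rmult_lt_reg_r (ellipse_form a (normal_vec a p))); auto.
  unfold Rdiv; rewrite Rmult_assoc, Rinv_l by lra. lra.
Qed.

Lemma second_meet_injective (p q : R * R) :
  a ^ 2 <= 2 -> on_ellipse a p -> on_ellipse a q -> second_meet a p = second_meet a q -> p = q.
Proof.
  destruct p as [x1 y1], q as [x2 y2]; intros a2_le p_on q_on E.
  assert (c_bounds : 1 / 2 <= / a ^ 2 < 1).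
  { pose proof inv_sq_bounds. split; [|lra].
    replace (1 / 2) with (/ 2) by field. apply Rinv_le_contravar; nra. }
  assert (x_eq : x1 = x2).
  { pose proof (fst_second_meet x1 y1 p_on) as F1. pose proof (fst_second_meet x2 y2 q_on) as F2.
    rewrite E in F1. set (c := / a ^ 2) in *. set (X := fst (second_meet a (x2, y2))) in *.
    assert (cross : x1 * fst_meet_num c x1 * fst_meet_den c x2
                    = x2 * fst_meet_num c x2 * fst_meet_den c x1).
    { replace (x1 * fst_meet_num c x1) with (- (X * fst_meet_den c x1)) by lra.
      replace (x2 * fst_meet_num c x2) with (- (X * fst_meet_den c x2)) by lra. ring. }
    pose proof (on_ellipse_fst_bound _ _ p_on) as x1_bound.
    pose proof (on_ellipse_fst_bound _ _ q_on) as x2_bound.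
    destruct (Rtotal_order x1 x2) as [lt|[eq|gt]]; auto.
    - pose proof (fst_meet_cross_lt c x1 x2 c_bounds x1_bound x2_bound lt); lra.
    - pose proof (fst_meet_cross_lt c x2 x1 c_bounds x2_bound x1_bound gt); lra. }
  subst x2. destruct (on_ellipse_same_fst a x1 y1 y2 p_on q_on) as [-> | ->]; auto.
  rewrite second_meet_reflect in E. apply (f_equal snd) in E. cbn [snd] in E.
  pose proof (second_meet_param_lt_m1 _ p_on).
  assert (y1 * (1 + second_meet_param a (x1, y1)) = 0) as E'.
  { unfold second_meet, along_normal, normal_vec in E; cbn [snd] in E. lra. }
  apply Rmult_integral in E' as [->|]; [f_equal; ring|lra].
Qed.

Lemma fst_second_meet_onto (X : R) :
  / a ^ 2 * X ^ 2 <= 1 -> exists p, on_ellipse a p /\ fst (second_meet a p) = X.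
Proof.
  intros X_bound. pose proof inv_sq_bounds as c_bounds. set (c := / a ^ 2) in *.
  assert (ac : c * a ^ 2 = 1) by (unfold c; field; auto).
  assert (sq_le_iff : forall z, c * z ^ 2 <= 1 <-> z ^ 2 <= a ^ 2).
  { intros z. rewrite <- ac. split; intros; nra. }
  apply sq_le_iff in X_bound.
  set (g := fun x => x * fst_meet_num c x + X * fst_meet_den c x).
  assert (g_cont : continuity g) by (unfold g, fst_meet_num, fst_meet_den; reg).
  assert (g_sign : g (- a) * g a <= 0).
  { destruct (fst_meet_num_den_vertex c a ac) as [N1 D1].
    destruct (fst_meet_num_den_vertex c (- a) ltac:(rewrite <- ac; ring)) as [N2 D2].
    unfold g; rewrite N1, D1, N2, D2.
    replace ((- a * c ^ 2 + X * c ^ 2) * (a * c ^ 2 + X * c ^ 2))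
      with (c ^ 4 * (X ^ 2 - a ^ 2)) by ring.
    assert (0 <= c ^ 4) by (apply pow_le; lra). nra. }
  destruct (IVT_cor g (- a) a g_cont ltac:(lra) g_sign) as [x [x_range gx]].
  assert (x_bound : c * x ^ 2 <= 1) by (apply sq_le_iff; nra).
  set (y := sqrt (1 - c * x ^ 2)).
  assert (p_on : on_ellipse a (x, y)).
  { apply on_ellipse_iff. fold c. unfold y. rewrite pow2_sqrt; lra. }
  exists (x, y). split; auto.
  pose proof (fst_second_meet x y p_on) as F. fold c in F.
  pose proof (ellipse_form_pos a a_neq0 _ (normal_vec_neq0 a a_neq0 _ p_on)) as D_pos.
  rewrite ellipse_form_normal_vec in D_pos by auto. fold c in D_pos.
  apply (Rmult_eq_reg_r (fst_meet_den c x)); [unfold g in gx; lra | lra].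
Qed.

Lemma second_meet_surjective (q : R * R) :
  on_ellipse a q -> exists p, on_ellipse a p /\ second_meet a p = q.
Proof.
  destruct q as [X Y]; intros q_on.
  destruct (fst_second_meet_onto X (on_ellipse_fst_bound _ _ q_on)) as ([x y] & p_on & fst_eq).
  pose proof (proj2 (normal_meet_iff a a_neq0 _ _ p_on) eq_refl) as [_ [meet_on _]].
  destruct (second_meet a (x, y)) as [X' Y'] eqn:meet_eq; cbn [fst] in fst_eq; subst X'.
  destruct (on_ellipse_same_fst a X Y' Y meet_on q_on) as [-> | ->].
  - exists (x, y); auto.
  - exists (x, - y). split.
    + rewrite on_ellipse_iff in *. replace ((- y) ^ 2) with (y ^ 2) by ring. auto.
    + rewrite second_meet_reflect, meet_eq. cbn [fst snd]. f_equal; ring.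
Qed.

(* The normal at [(x, y)] meets the [y]-axis at [y (1 - a^2)]; taking [y = 1 / (a^2 - 1)] makes
   it pass through [(0, -1)], the image of [(0, 1)], and [x != 0] exists iff [a^2 > 2]. *)
Lemma second_meet_collision :
  2 < a ^ 2 ->
  exists p q, on_ellipse a p /\ on_ellipse a q /\ p <> q /\ second_meet a p = second_meet a q.
Proof.
  intros a2_gt. set (s := sqrt (a ^ 2 - 2)).
  assert (s_sq : s ^ 2 = a ^ 2 - 2) by (apply pow2_sqrt; lra).
  assert (s_pos : 0 < s) by (apply sqrt_lt_R0; lra).
  set (p := (a ^ 2 * s / (a ^ 2 - 1), 1 / (a ^ 2 - 1))).
  assert (p_on : on_ellipse a p).
  { unfold on_ellipse, p; cbn [fst snd].
    replace ((a ^ 2 * s / (a ^ 2 - 1) / a) ^ 2 + (1 / (a ^ 2 - 1)) ^ 2)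
      with ((a ^ 2 * s ^ 2 + 1) / (a ^ 2 - 1) ^ 2) by (field; lra).
    rewrite s_sq. field. lra. }
  assert (top_on : on_ellipse a (0, 1)) by (unfold on_ellipse; cbn [fst snd]; field; auto).
  assert (bottom_neq_p : (0, -1) <> p).
  { unfold p; intros E. apply (f_equal snd) in E; cbn [snd] in E.
    assert (0 < 1 / (a ^ 2 - 1)) by (apply Rdiv_lt_0_compat; lra). lra. }
  assert (meet_p : normal_meet a p (0, -1)).
  { split; [|split]; auto; [|unfold on_ellipse; cbn [fst snd]; field; auto].
    exists (- a ^ 2). unfold p, normal_vec; cbn [fst snd]. f_equal; field; lra. }
  assert (meet_top : normal_meet a (0, 1) (0, -1)).
  { split; [|split]; [|unfold on_ellipse; cbn [fst snd]; field; auto|].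
    - exists (-2). unfold normal_vec; cbn [fst snd]. f_equal; field; auto.
    - intros E. apply (f_equal snd) in E; cbn [snd] in E. lra. }
  exists p, (0, 1). repeat split; auto.
  - intros E. apply (f_equal fst) in E. unfold p in E; cbn [fst] in E.
    assert (0 < a ^ 2 * s / (a ^ 2 - 1)) by (apply Rdiv_lt_0_compat; nra). lra.
  - apply normal_meet_iff in meet_p, meet_top; auto. congruence.
Qed.

End ExplicitMeet.

Theorem mainTheorem14 (a : R) (ha : 1 < a) :
  h_bijective_on_Y a <-> a <= sqrt 2.
Proof.
  assert (a_neq0 : a <> 0) by lra.
  assert (bound_iff : a <= sqrt 2 <-> a ^ 2 <= 2).
  { split; intros le.
    - pose proof (pow2_sqrt 2 ltac:(lra)). nra.
    - rewrite <- (sqrt_pow2 a) by lra. apply sqrt_le_1_alt; auto. }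
  rewrite bound_iff. unfold h_bijective_on_Y. split.
  - intros [inj _]. apply Rnot_lt_le; intros a2_gt.
    destruct (second_meet_collision a ha a2_gt) as (p & q & p_on & q_on & p_neq & E).
    apply p_neq, inj; auto. rewrite !h_eq_second_meet; auto.
  - intros a2_le. split.
    + intros p q p_on q_on. rewrite !h_eq_second_meet; auto. apply second_meet_injective; auto.
    + intros q q_on. destruct (second_meet_surjective a ha q q_on) as (p & p_on & E).
      exists p. rewrite h_eq_second_meet; auto.
Qed.
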